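(* Let $n\geq 0$ be an integer, $r,s\in\mathbf{N}$ and $k\in\mathbf{Z}$. Then \[\tilde{A}_{n}^{(r,k)}(x)=\sum_{m=0}^{n}\left\{\sum_{l=0}^{n-m}\binom{n}{l}S_{1}(n-l,m)\tilde{A}_{l}^{(r+s,k)}(s)\right\}B_{m}^{(s)}(x).\]
   Context: For $k\in\mathbf{Z}$, $Lif_{k}(x)=\sum_{m=0}^{\infty}\frac{x^{m}}{m!(m+1)^{k}}$. For integers $r\geq 0$, $k\in\mathbf{Z}$, the polynomials $\tilde{A}_{n}^{(r,k)}(x)$ are defined by \[\left(\frac{t}{(1+t)\log(1+t)}\right)^{r}Lif_{k}\left(-\log(1+t)\right)(1+t)^{x}=\sum_{n=0}^{\infty}\tilde{A}_{n}^{(r,k)}(x)\frac{t^{n}}{n!}.\] The Bernoulli polynomials of order $s$ are defined by $\left(\frac{t}{e^{t}-1}\right)^{s}e^{xt}=\sum_{n=0}^{\infty}B_{n}^{(s)}(x)\frac{t^{n}}{n!}$. $S_{1}(n,m)$ denotes the signed Stirling numbers of the first kind, defined by $x(x-1)\cdots(x-n+1)=\sum_{m=0}^{n}S_{1}(n,m)x^{m}$. *)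

(* Formal power series are represented by coefficient
   functions nat -> R over a numFieldType R (characteristic 0). *)
From mathcomp Require Import all_boot all_order all_algebra.
Set Implicit Arguments. Unset Strict Implicit. Unset Printing Implicit Defensive.
Import Order.TTheory GRing.Theory Num.Theory.
Local Open Scope ring_scope.

Section FPS.
Variable R : numFieldType.

Definition fps := nat -> R.

Definition fps_one : fps := fun j => if j == 0%N then 1 else 0.
Definition fps_X : fps := fun j => if j == 1%N then 1 else 0.
Definition fps_add (f g : fps) : fps := fun j => f j + g j.
Definition fps_opp (f : fps) : fps := fun j => - f j.
Definition fps_scale (c : R) (f : fps) : fps := fun j => c * f j.
Definition fps_mul (f g : fps) : fps :=
  fun n => \sum_(i < n.+1) f i * g (n - i)%N.
Definition fps_pow (f : fps) (r : nat) : fps := iter r (fps_mul f) fps_one.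
(* f / t  (for f with zero constant term) *)
Definition fps_divX (f : fps) : fps := fun j => f j.+1.
Fixpoint fps_inv_list (a : fps) (n : nat) : seq R :=
  if n is n'.+1 then
    let l := fps_inv_list a n' in
    rcons l (- (a 0%N)^-1 * \sum_(i < n) a (n - i)%N * nth 0 l i)
  else [:: (a 0%N)^-1].
Definition fps_inv (a : fps) : fps := fun n => nth 0 (fps_inv_list a n) n.
(* composition c(g) = sum_m c_m g^m, for g with zero constant term *)
Definition fps_comp (c g : fps) : fps :=
  fun n => \sum_(m < n.+1) c m * fps_pow g m n.

Definition fps_exp : fps := fun j => (j`!%:R)^-1.
Definition fps_log1p : fps :=
  fun j => if j is j'.+1 then (-1) ^+ j' / j%:R else 0.
Definition fps_Lif (k : int) : fps :=
  fun m => (m`!%:R * ((m.+1)%:R ^ k))^-1.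

Definition fps_A_factor : fps :=
  fps_inv (fps_mul (fps_add fps_one fps_X) (fps_divX fps_log1p)).
(* (1+t)^x = exp(x log(1+t)) *)
Definition fps_onept_pow (x : R) : fps :=
  fps_comp fps_exp (fps_scale x fps_log1p).

Definition Atil_gf (r : nat) (k : int) (x : R) : fps :=
  fps_mul (fps_mul (fps_pow fps_A_factor r)
                   (fps_comp (fps_Lif k) (fps_opp fps_log1p)))
          (fps_onept_pow x).
Definition Atil (n r : nat) (k : int) (x : R) : R := n`!%:R * Atil_gf r k x n.

Definition bern_gf (s : nat) (x : R) : fps :=
  fps_mul (fps_pow (fps_inv (fps_divX (fps_add fps_exp (fps_opp fps_one)))) s)
          (fps_comp fps_exp (fps_scale x fps_X)).
Definition bernoulli_poly (s n : nat) (x : R) : R := n`!%:R * bern_gf s x n.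

End FPS.

Definition stirling1 (n m : nat) : int :=
  (\prod_(i < n) ('X - (i%:R)%:P) : {poly int})`_m.

From mathcomp Require Import all_boot all_order all_algebra zify ring.
From Stdlib Require Import FunctionalExtensionality.
Unset Strict Implicit. Unset Printing Implicit Defensive.
Import Order.TTheory GRing.Theory Num.Theory.
Local Open Scope ring_scope.

(** Write [A_r(x; t)] for the generating function of the [Atil _ r k x] and
    [B_s(x; t)] for that of the [bernoulli_poly s _ x].  Since
    [exp (log (1 + t)) = 1 + t], the series [B_s(x; log (1 + t))] equals
    [(log (1 + t) / t)^s (1 + t)^x], and the prefactors cancel:
    [A_r(x; t) = A_(r+s)(s; t) B_s(x; log (1 + t))].  Comparing coefficients by
    the Leibniz rule for exponential generating functions gives the identity,
    once we know [log (1 + t)^m / m! = sum_j S1(j, m) t^j / j!].  This holds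
    because [(1 + t)^N = sum_m N^m log (1 + t)^m / m!] has [t^j]-coefficient
    [binomial N j = N (N - 1) ... (N - j + 1) / j!], so two polynomials in [N]
    agree at infinitely many points.  Identities between power series are
    proved coefficientwise by truncating to polynomials, where the algebra of
    [{poly R}] applies. *)

Lemma sumr_ord_narrow {R : nmodType} (F : nat -> R) (a N : nat) : (a <= N)%N ->
  (forall j, (a <= j < N)%N -> F j = 0) ->
  \sum_(j < N) F j = \sum_(j < a) F j.
Proof.
move=> aN F0; rewrite -(subnKC aN) big_split_ord /=.
rewrite [X in _ + X]big1 ?addr0 // => j _.
by apply: F0; have := ltn_ord j; lia.
Qed.

Lemma coef_exp_lt (R : comNzRingType) (q : {poly R}) m n :
  q`_0 = 0 -> (n < m)%N -> (q ^+ m)`_n = 0.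
Proof.
move=> q0 ltnm.
have -> : q = (\poly_(i < size q) q`_i.+1) * 'X.
  apply/polyP => i; rewrite coefMX coef_poly; case: i => [|i] //=.
  by case: ltnP => // h; rewrite nth_default //; lia.
by rewrite exprMn coefMXn ltnm.
Qed.

Lemma poly_eq0_nat_roots {R : numFieldType} {Q : {poly R}} {j} :
  (forall N, (j <= N)%N -> Q.[N%:R] = 0) -> Q = 0.
Proof.
move=> QN; apply/eqP/negPn/negP => Qn0.
pose rs := [seq (j + i)%:R | i <- iota 0 (size Q)] : seq R.
suff : (size rs < size Q)%N by rewrite size_map size_iota ltnn.
apply: max_poly_roots Qn0 _ _.
  by apply/allP => y /mapP [i _ ->]; apply/eqP/QN/leq_addr.
rewrite map_inj_uniq ?iota_uniq // => a b /eqP.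
by rewrite eqr_nat eqn_add2l => /eqP.
Qed.

Lemma natr_fact_neq0 (R : numDomainType) n : (n`!)%:R != 0 :> R.
Proof. by rewrite pnatr_eq0 -lt0n fact_gt0. Qed.

Section PowerSeries.
Variable R : numFieldType.
Implicit Types (f g h c d a b : fps R) (p q : {poly R}).

(** * Truncation to polynomials *)

Definition fps_of_poly p : fps R := fun i => p`_i.
Definition eq_upto (n : nat) f g := forall i, (i <= n)%N -> f i = g i.
Definition fps_trunc n f : {poly R} := \poly_(i < n.+1) f i.

Lemma eq_upto_trunc n f : eq_upto n f (fps_of_poly (fps_trunc n f)).
Proof. by move=> i hi; rewrite /fps_of_poly coef_poly ltnS hi. Qed.

Lemma fps_eq_upto f g : (forall n, eq_upto n f g) -> f = g.
Proof. by move=> fg; apply: functional_extensionality => i; apply: (fg i). Qed.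

Lemma eq_upto_le {m n f g} : (m <= n)%N -> eq_upto n f g -> eq_upto m f g.
Proof. by move=> lemn fg i hi; apply: fg; lia. Qed.

Lemma eq_upto_sym {n f g} : eq_upto n f g -> eq_upto n g f.
Proof. by move=> fg i hi; rewrite fg. Qed.

Lemma eq_upto_trans {n f g h} : eq_upto n f g -> eq_upto n g h -> eq_upto n f h.
Proof. by move=> fg gh i hi; rewrite fg ?gh. Qed.

Lemma eq_upto_mul {n f f' g g'} :
  eq_upto n f f' -> eq_upto n g g' -> eq_upto n (fps_mul f g) (fps_mul f' g').
Proof.
move=> ff' gg' i hi; apply: eq_bigr => j _.
by have := ltn_ord j => ltji; rewrite ff' ?gg' //; lia.
Qed.

Lemma eq_upto_pow {n} m {f f'} :
  eq_upto n f f' -> eq_upto n (fps_pow f m) (fps_pow f' m).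
Proof.
move=> ff'; elim: m => [|m IH] //.
by rewrite /fps_pow !iterS; apply: eq_upto_mul.
Qed.

Lemma eq_upto_comp {n c c' g g'} :
  eq_upto n c c' -> eq_upto n g g' -> eq_upto n (fps_comp c g) (fps_comp c' g').
Proof.
move=> cc' gg' i hi; apply: eq_bigr => j _.
by have := ltn_ord j => ltji; rewrite cc' ?(eq_upto_pow j gg') //; lia.
Qed.

Definition fps_deriv f : fps R := fun j => (j.+1)%:R * f j.+1.

Lemma eq_upto_deriv {n f g} :
  eq_upto n.+1 f g -> eq_upto n (fps_deriv f) (fps_deriv g).
Proof. by move=> fg i hi; rewrite /fps_deriv fg. Qed.

Lemma fps_of_polyM p q :
  fps_mul (fps_of_poly p) (fps_of_poly q) = fps_of_poly (p * q).
Proof. by apply: functional_extensionality => n; rewrite /fps_of_poly coefM. Qed.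

Lemma fps_of_poly1 : fps_one R = fps_of_poly 1.
Proof. by apply: functional_extensionality => -[|n]; rewrite /fps_of_poly coef1. Qed.

Lemma fps_of_polyX : fps_X R = fps_of_poly 'X.
Proof.
apply: functional_extensionality => n.
by rewrite /fps_X /fps_of_poly coefX; case: (n == 1)%N.
Qed.

Lemma fps_of_poly_pow p m : fps_pow (fps_of_poly p) m = fps_of_poly (p ^+ m).
Proof.
elim: m => [|m IH]; first by rewrite expr0 -fps_of_poly1.
by rewrite /fps_pow iterS -/(fps_pow _ _) IH fps_of_polyM exprS.
Qed.

Lemma fps_of_poly_deriv p : fps_deriv (fps_of_poly p) = fps_of_poly p^`().
Proof.
apply: functional_extensionality => n.
by rewrite /fps_deriv /fps_of_poly coef_deriv mulr_natl.
Qed.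

Lemma fps_of_poly_comp p q : q`_0 = 0 ->
  fps_comp (fps_of_poly p) (fps_of_poly q) = fps_of_poly (p \Po q).
Proof.
move=> q0; apply: functional_extensionality => n.
rewrite /fps_comp /fps_of_poly coef_comp_poly.
under eq_bigr do rewrite fps_of_poly_pow.
pose N := maxn (size p) n.+1.
rewrite -(@sumr_ord_narrow _ (fun j => p`_j * (q ^+ j)`_n) n.+1 N) ?leq_maxr //.
  rewrite (@sumr_ord_narrow _ (fun j => p`_j * (q ^+ j)`_n) (size p) N) ?leq_maxl //.
  by move=> j /andP[hj _]; rewrite nth_default ?mul0r.
by move=> j /andP[hj _]; rewrite coef_exp_lt ?mulr0.
Qed.

Lemma coef0_fps_trunc n {g} : g 0%N = 0 -> (fps_trunc n g)`_0 = 0.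
Proof. by move=> g0; rewrite coef_poly. Qed.

(** * Ring laws *)

Lemma fps_mulC f g : fps_mul f g = fps_mul g f.
Proof.
apply: fps_eq_upto => n.
apply: eq_upto_trans (eq_upto_mul (eq_upto_trunc n f) (eq_upto_trunc n g)) _.
rewrite fps_of_polyM mulrC -fps_of_polyM.
by apply: eq_upto_mul; apply: eq_upto_sym; apply: eq_upto_trunc.
Qed.

Lemma fps_mulA f g h : fps_mul f (fps_mul g h) = fps_mul (fps_mul f g) h.
Proof.
apply: fps_eq_upto => n.
apply: eq_upto_trans (eq_upto_mul (eq_upto_trunc n f)
  (eq_upto_mul (eq_upto_trunc n g) (eq_upto_trunc n h))) _.
rewrite !fps_of_polyM mulrA -!fps_of_polyM.
by apply: eq_upto_mul; [apply: eq_upto_mul|]; apply: eq_upto_sym; apply: eq_upto_trunc.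
Qed.

Lemma fps_mulCA f g h : fps_mul f (fps_mul g h) = fps_mul g (fps_mul f h).
Proof. by rewrite fps_mulA (fps_mulC f g) -fps_mulA. Qed.

Lemma fps_mul1l f : fps_mul (fps_one R) f = f.
Proof.
apply: fps_eq_upto => n.
apply: eq_upto_trans (eq_upto_mul (fun _ _ => erefl) (eq_upto_trunc n f)) _.
by rewrite fps_of_poly1 fps_of_polyM mul1r; apply: eq_upto_sym; apply: eq_upto_trunc.
Qed.

Lemma fps_mul1r f : fps_mul f (fps_one R) = f.
Proof. by rewrite fps_mulC fps_mul1l. Qed.

Lemma fps_mulDl f g h :
  fps_mul (fps_add f g) h = fps_add (fps_mul f h) (fps_mul g h).
Proof.
apply: functional_extensionality => n; rewrite /fps_mul /fps_add -big_split /=.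
by apply: eq_bigr => i _; rewrite mulrDl.
Qed.

Lemma fps_mulZl (a : R) f g : fps_mul (fps_scale a f) g = fps_scale a (fps_mul f g).
Proof.
apply: functional_extensionality => n; rewrite /fps_mul /fps_scale mulr_sumr.
by apply: eq_bigr => i _; rewrite mulrA.
Qed.

Lemma fps_mulZr (a : R) f g : fps_mul f (fps_scale a g) = fps_scale a (fps_mul f g).
Proof. by rewrite fps_mulC fps_mulZl fps_mulC. Qed.

Lemma fps_powD f (a b : nat) :
  fps_pow f (a + b) = fps_mul (fps_pow f a) (fps_pow f b).
Proof.
elim: a => [|a IH]; first by rewrite add0n fps_mul1l.
by rewrite addSn /fps_pow !iterS -!/(fps_pow _ _) IH fps_mulA.
Qed.

Lemma fps_powMn f g (a : nat) :
  fps_pow (fps_mul f g) a = fps_mul (fps_pow f a) (fps_pow g a).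
Proof.
elim: a => [|a IH]; first by rewrite fps_mul1l.
by rewrite /fps_pow !iterS -!/(fps_pow _ _) IH -!fps_mulA (fps_mulCA g).
Qed.

Lemma fps_pow1n (a : nat) : fps_pow (fps_one R) a = fps_one R.
Proof.
by elim: a => [|a IH] //; rewrite /fps_pow iterS -/(fps_pow _ _) IH fps_mul1l.
Qed.

Lemma fps_powZ (a : R) g m :
  fps_pow (fps_scale a g) m = fps_scale (a ^+ m) (fps_pow g m).
Proof.
elim: m => [|m IH].
  by apply: functional_extensionality => n; rewrite /fps_scale expr0 mul1r.
rewrite /fps_pow !iterS -!/(fps_pow _ _) IH fps_mulZl fps_mulZr.
by apply: functional_extensionality => n; rewrite /fps_scale mulrA exprS.
Qed.

(** * Composition and derivative *)

Lemma fps_compM c d g : g 0%N = 0 ->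
  fps_comp (fps_mul c d) g = fps_mul (fps_comp c g) (fps_comp d g).
Proof.
move=> g0; apply: fps_eq_upto => n.
have q0 := coef0_fps_trunc n g0.
apply: eq_upto_trans (eq_upto_comp (eq_upto_mul (eq_upto_trunc n c)
  (eq_upto_trunc n d)) (eq_upto_trunc n g)) _.
rewrite fps_of_polyM fps_of_poly_comp // comp_polyM -fps_of_polyM -!fps_of_poly_comp //.
by apply: eq_upto_mul; apply: eq_upto_comp; apply: eq_upto_sym; apply: eq_upto_trunc.
Qed.

Lemma fps_compD c d g :
  fps_comp (fps_add c d) g = fps_add (fps_comp c g) (fps_comp d g).
Proof.
apply: functional_extensionality => n; rewrite /fps_comp /fps_add -big_split /=.
by apply: eq_bigr => i _; rewrite mulrDl.
Qed.

Lemma fps_compN c g : fps_comp (fps_opp c) g = fps_opp (fps_comp c g).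
Proof.
apply: functional_extensionality => n; rewrite /fps_comp /fps_opp -sumrN /=.
by apply: eq_bigr => i _; rewrite mulNr.
Qed.

Lemma fps_comp1 g : fps_comp (fps_one R) g = fps_one R.
Proof.
apply: functional_extensionality => n; rewrite /fps_comp big_ord_recl /= big1.
  by rewrite /fps_one /= mul1r addr0.
by move=> i _; rewrite /fps_one /= mul0r.
Qed.

Lemma fps_comp_pow c g m : g 0%N = 0 ->
  fps_comp (fps_pow c m) g = fps_pow (fps_comp c g) m.
Proof.
move=> g0; elim: m => [|m IH]; first by rewrite fps_comp1.
by rewrite /fps_pow !iterS -!/(fps_pow _ _) fps_compM // IH.
Qed.

Lemma fps_deriv_comp c g : g 0%N = 0 ->
  fps_deriv (fps_comp c g) = fps_mul (fps_comp (fps_deriv c) g) (fps_deriv g).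
Proof.
move=> g0; apply: fps_eq_upto => n.
have q0 := coef0_fps_trunc n.+1 g0.
apply: eq_upto_trans (eq_upto_deriv (eq_upto_comp (eq_upto_trunc n.+1 c)
  (eq_upto_trunc n.+1 g))) _.
rewrite fps_of_poly_comp // fps_of_poly_deriv deriv_comp -fps_of_polyM.
rewrite -fps_of_poly_comp // -!fps_of_poly_deriv.
apply: eq_upto_mul; last by apply/eq_upto_deriv/eq_upto_sym/eq_upto_trunc.
apply: eq_upto_comp; first by apply/eq_upto_deriv/eq_upto_sym/eq_upto_trunc.
exact/(eq_upto_le (leqnSn n))/eq_upto_sym/eq_upto_trunc.
Qed.

Lemma fps_compX g : g 0%N = 0 -> fps_comp (fps_X R) g = g.
Proof.
move=> g0; apply: functional_extensionality => -[|n].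
  by rewrite /fps_comp big_ord1 /fps_X /= mul0r.
rewrite /fps_comp big_ord_recl big_ord_recl /= big1.
  by rewrite /fps_X /= mul0r mul1r add0r addr0 /fps_pow /= fps_mul1r.
by move=> i _; rewrite /fps_X /= mul0r.
Qed.

Definition fps_dilate (x : R) c : fps R := fun j => x ^+ j * c j.

Lemma fps_comp_dilate (x : R) c g :
  fps_comp (fps_dilate x c) g = fps_comp c (fps_scale x g).
Proof.
apply: functional_extensionality => n; apply: eq_bigr => m _.
by rewrite fps_powZ /fps_dilate /fps_scale mulrCA mulrA.
Qed.

Lemma fps_comp_scaleX (x : R) c : fps_comp c (fps_scale x (fps_X R)) = fps_dilate x c.
Proof.
apply: functional_extensionality => n; rewrite /fps_comp big_ord_recr /= big1.
  rewrite fps_powZ fps_of_polyX fps_of_poly_pow /fps_scale /fps_of_poly.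
  by rewrite coefXn eqxx mulr1 add0r mulrC.
move=> i _; rewrite fps_powZ fps_of_polyX fps_of_poly_pow /fps_scale /fps_of_poly.
by rewrite coefXn eqn_leq leqNgt ltn_ord /= !mulr0.
Qed.

(** * Multiplication by [t] and inversion *)

Lemma fps_mulX f : fps_mul (fps_X R) f = fun n => if n is n'.+1 then f n' else 0.
Proof.
apply: functional_extensionality => -[|n]; rewrite /fps_mul.
  by rewrite big_ord1 /fps_X /= mul0r.
rewrite big_ord_recl big_ord_recl /= big1.
  by rewrite /fps_X /= mul0r mul1r add0r addr0 subn1.
by move=> i _; rewrite /fps_X /= mul0r.
Qed.

Lemma fps_mulX_divX {f} : f 0%N = 0 -> fps_mul (fps_X R) (fps_divX f) = f.
Proof. by move=> f0; rewrite fps_mulX; apply: functional_extensionality => -[|n]. Qed.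

Lemma fps_mulX_inj f g : fps_mul (fps_X R) f = fps_mul (fps_X R) g -> f = g.
Proof.
rewrite !fps_mulX => fg; apply: functional_extensionality => n.
exact: (congr1 (fun F => F n.+1) fg).
Qed.

Lemma fps_comp_divX f g : f 0%N = 0 -> g 0%N = 0 ->
  fps_mul g (fps_comp (fps_divX f) g) = fps_comp f g.
Proof.
by move=> f0 g0; rewrite -{2}(fps_mulX_divX f0) fps_compM // fps_compX.
Qed.

Lemma fps_mul1DX f : fps_mul (fps_add (fps_one R) (fps_X R)) f =
  fun n => f n + (if n is n'.+1 then f n' else 0).
Proof. by rewrite fps_mulDl fps_mul1l fps_mulX. Qed.

Lemma size_fps_inv_list a n : size (fps_inv_list a n) = n.+1.
Proof. by elim: n => [|n IH] //=; rewrite size_rcons IH. Qed.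

Lemma nth_fps_inv_list a n i :
  (i <= n)%N -> nth 0 (fps_inv_list a n) i = fps_inv a i.
Proof.
elim: n => [|n IH]; first by rewrite leqn0 => /eqP ->.
rewrite leq_eqVlt => /predU1P[-> //|ltin].
by rewrite /= nth_rcons size_fps_inv_list ltin IH.
Qed.

Lemma fps_invS a n : fps_inv a n.+1 =
  - (a 0%N)^-1 * \sum_(i < n.+1) a (n.+1 - i)%N * fps_inv a i.
Proof.
rewrite {1}/fps_inv /= nth_rcons size_fps_inv_list ltnn eqxx.
by congr (_ * _); apply: eq_bigr => i _; rewrite nth_fps_inv_list // -ltnS.
Qed.

Lemma fps_mulV a : a 0%N != 0 -> fps_mul a (fps_inv a) = fps_one R.
Proof.
move=> a0; apply: functional_extensionality => -[|n].
  by rewrite /fps_mul big_ord1 /fps_inv /= mulfV.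
rewrite fps_mulC /fps_mul big_ord_recr /= subnn fps_invS.
rewrite mulrAC mulNr mulVf // mulN1r /fps_one /=.
rewrite (eq_bigr (fun i : 'I_n.+1 => a (n.+1 - i)%N * fps_inv a i)) ?subrr //.
by move=> i _; exact: mulrC.
Qed.

Lemma fps_inv_unique {a b} : a 0%N != 0 -> fps_mul a b = fps_one R -> fps_inv a = b.
Proof.
move=> a0 ab1.
by rewrite -[fps_inv a]fps_mul1l -ab1 -fps_mulA (fps_mulC b) fps_mulA fps_mulV // fps_mul1l.
Qed.

(** * Exponential and logarithm *)

Local Notation E := (fps_exp R).
Local Notation L := (fps_log1p R).
Local Notation Z := (fps_add (fps_one R) (fps_X R)).

Lemma fps_deriv_exp : fps_deriv E = E.
Proof.
apply: functional_extensionality => j; rewrite /fps_deriv /fps_exp factS natrM invfM.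
by rewrite mulrA mulfV ?mul1r // pnatr_eq0.
Qed.

Lemma fps_mul1DX_deriv_log1p : fps_mul Z (fps_deriv L) = fps_one R.
Proof.
have dL : fps_deriv L = fun j => (-1) ^+ j.
  apply: functional_extensionality => j; rewrite /fps_deriv /fps_log1p.
  by rewrite mulrC -mulrA mulVf ?mulr1 // pnatr_eq0.
rewrite fps_mul1DX dL; apply: functional_extensionality => -[|n].
  by rewrite /fps_one /= addr0.
by rewrite /fps_one /= exprS mulN1r addNr.
Qed.

(** [y = exp (log (1 + t))] solves [(1 + t) y' = y] with [y(0) = 1], which
    forces [y = 1 + t]. *)
Lemma fps_exp_log1p : fps_comp E L = Z.
Proof.
set y := fps_comp E L.
have ode : fps_mul Z (fps_deriv y) = y.
  by rewrite fps_deriv_comp // fps_deriv_exp fps_mulCA fps_mul1DX_deriv_log1p fps_mul1r.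
have ode_n n : fps_deriv y n + (if n is n'.+1 then fps_deriv y n' else 0) = y n.
  by have := congr1 (fun F => F n) ode; rewrite fps_mul1DX.
have y0 : y 0%N = 1 by rewrite /y /fps_comp big_ord1 /fps_exp /= invr1 mul1r.
have y1 : y 1%N = 1 by have := ode_n 0%N; rewrite addr0 y0 /fps_deriv mul1r.
have y2 n : y n.+2 = 0.
  elim: n => [|n IH].
    have := ode_n 1%N; rewrite /fps_deriv y1 mul1r -[RHS]add0r => /addIr /eqP.
    by rewrite mulf_eq0 pnatr_eq0 /= => /eqP.
  have := ode_n n.+2; rewrite /fps_deriv IH mulr0 addr0 => /eqP.
  by rewrite mulf_eq0 pnatr_eq0 /= => /eqP.
apply: functional_extensionality => -[|[|n]]; rewrite /fps_add /fps_one /fps_X /=.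
- by rewrite y0 addr0.
- by rewrite y1 add0r.
- by rewrite y2 addr0.
Qed.

Lemma fps_dilate_expD (x y : R) :
  fps_mul (fps_dilate x E) (fps_dilate y E) = fps_dilate (x + y) E.
Proof.
apply: functional_extensionality => n; rewrite /fps_mul /fps_dilate /fps_exp.
rewrite addrC exprDn mulr_suml; apply: eq_bigr => i _.
have hi : (i <= n)%N by rewrite -ltnS.
rewrite -[_ *+ 'C(n, i)]mulr_natr -[RHS]mulrA -(bin_fact hi) !natrM !invfM.
by rewrite mulVKf ?pnatr_eq0 -?lt0n ?bin_gt0 //; ring.
Qed.

Lemma fps_onept_powE (x : R) : fps_onept_pow x = fps_comp (fps_dilate x E) L.
Proof. by rewrite fps_comp_dilate. Qed.

Lemma fps_onept_powD (x y : R) :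
  fps_onept_pow (x + y) = fps_mul (fps_onept_pow x) (fps_onept_pow y).
Proof. by rewrite !fps_onept_powE -fps_dilate_expD fps_compM. Qed.

Lemma fps_onept_pow1 : fps_onept_pow 1 = Z.
Proof.
rewrite /fps_onept_pow -fps_exp_log1p; congr fps_comp.
by apply: functional_extensionality => j; rewrite /fps_scale mul1r.
Qed.

Lemma fps_onept_pow_nat (s : nat) : fps_onept_pow (s%:R : R) = fps_pow Z s.
Proof.
elim: s => [|s IH].
  rewrite fps_onept_powE (_ : fps_dilate 0%:R E = fps_one R) ?fps_comp1 //.
  apply: functional_extensionality => -[|j]; rewrite /fps_dilate /fps_exp /fps_one /=.
    by rewrite invr1 mulr1.
  by rewrite expr0n mul0r.
by rewrite -natr1 fps_onept_powD IH fps_onept_pow1 /fps_pow iterS fps_mulC.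
Qed.

Lemma coef_fps_pow_1DX (N j : nat) : fps_pow Z N j = ('C(N, j))%:R.
Proof.
elim: N j => [|N IH] j.
  by case: j => [|j] //; rewrite /fps_pow /= /fps_one /= bin0n.
rewrite /fps_pow iterS -/(fps_pow _ _) fps_mul1DX.
case: j => [|j]; first by rewrite IH !bin0 addr0.
by rewrite !IH binS natrD.
Qed.

Lemma coef_fps_pow_log1p_lt m j : (j < m)%N -> fps_pow L m j = 0.
Proof.
move=> ltjm; rewrite (eq_upto_pow m (eq_upto_trunc j L) j (leqnn j)).
by rewrite fps_of_poly_pow /fps_of_poly coef_exp_lt // coef0_fps_trunc.
Qed.

(** * Stirling numbers and powers of the logarithm *)

Local Notation falling j := (\prod_(i < j) ('X - (i%:R)%:P) : {poly R}).

Lemma map_falling j :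
  map_poly (intr : int -> R) (\prod_(i < j) ('X - (i%:R)%:P)) = falling j.
Proof.
elim: j => [|j IH]; first by rewrite !big_ord0 rmorph1.
rewrite !big_ord_recr /= rmorphM /= IH; congr (_ * _).
by rewrite rmorphB /= map_polyX map_polyC /= rmorph_nat.
Qed.

Lemma stirling1E j m : (stirling1 j m)%:~R = (falling j)`_m.
Proof. by rewrite /stirling1 -map_falling coef_map. Qed.

Lemma size_falling j : size (falling j) = j.+1.
Proof. by rewrite size_prod_XsubC [index_enum _]unlock -enumT size_enum_ord. Qed.

Lemma stirling1_lt j m : (j < m)%N -> (stirling1 j m)%:~R = 0 :> R.
Proof. by move=> ltjm; rewrite stirling1E nth_default // size_falling. Qed.

Lemma horner_falling j N : (j <= N)%N -> (falling j).[N%:R] = (N ^_ j)%:R.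
Proof.
move=> lejN; rewrite horner_prod ffact_prod natr_prod; apply: eq_bigr => i _.
by rewrite hornerXsubC natrB //; have := ltn_ord i; lia.
Qed.

(** Both sides of [(1 + t)^N = sum_m N^m log (1 + t)^m / m!] have
    [t^j]-coefficient polynomial in [N]; they agree for every [N >= j], hence
    as polynomials, and comparing the coefficients of [N^m] gives the claim. *)
Lemma coef_fps_pow_log1p j m :
  (j`!)%:R * fps_pow L m j = (m`!)%:R * (stirling1 j m)%:~R.
Proof.
rewrite stirling1E; case: (ltnP j m) => [ltjm|lemj].
  by rewrite coef_fps_pow_log1p_lt // nth_default ?mulr0 // size_falling.
pose Q := \poly_(i < j.+1) ((j`!)%:R * (E i * fps_pow L i j)) - falling j.
have QN N : (j <= N)%N -> Q.[N%:R] = 0.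
  move=> lejN; rewrite hornerD hornerN horner_poly horner_falling //.
  rewrite -bin_ffact natrM -coef_fps_pow_1DX -fps_onept_pow_nat fps_onept_powE.
  apply/eqP; rewrite subr_eq0 mulr_suml; apply/eqP.
  by apply: eq_bigr => i _; rewrite /fps_dilate; ring.
have /(congr1 (fun p : {poly R} => p`_m)) := poly_eq0_nat_roots QN.
rewrite coefB coef_poly ltnS lemj coef0 => /eqP; rewrite subr_eq0 => /eqP <-.
by rewrite /fps_exp mulrCA mulVKf // natr_fact_neq0.
Qed.

Lemma fps_comp_log1p_egf c j :
  (j`!)%:R * fps_comp c L j =
  \sum_(m < j.+1) (stirling1 j m)%:~R * ((m`!)%:R * c m).
Proof.
rewrite /fps_comp mulr_sumr; apply: eq_bigr => m _.
by rewrite mulrCA coef_fps_pow_log1p; ring.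
Qed.

Lemma fps_mul_egf f g n :
  (n`!)%:R * fps_mul f g n =
  \sum_(l < n.+1) ('C(n, l))%:R * ((l`!)%:R * f l) * (((n - l)`!)%:R * g (n - l)%N).
Proof.
rewrite /fps_mul mulr_sumr; apply: eq_bigr => l _.
have lenl : (l <= n)%N by rewrite -ltnS.
by rewrite -(bin_fact lenl) !natrM; ring.
Qed.

(** * The generating function identity *)

Local Notation bernoulli_denom := (fps_divX (fps_add E (fps_opp (fps_one R)))).

Lemma fps_comp_bernoulli_denom :
  fps_mul (fps_divX L) (fps_comp bernoulli_denom L) = fps_one R.
Proof.
apply: fps_mulX_inj; rewrite fps_mulA fps_mulX_divX // fps_comp_divX //; last first.
  by rewrite /fps_add /fps_opp /fps_exp /fps_one /= invr1 subrr.
rewrite fps_compD fps_compN fps_comp1 fps_exp_log1p fps_mul1r.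
by apply: functional_extensionality => j; rewrite /fps_add /fps_opp addrAC subrr add0r.
Qed.

Lemma fps_comp_inv_bernoulli_denom :
  fps_comp (fps_inv bernoulli_denom) L = fps_divX L.
Proof.
have denom0 : bernoulli_denom 0%N != 0.
  by rewrite /fps_divX /fps_add /fps_opp /fps_exp /fps_one /= subr0 invr1 oner_neq0.
have comp_denom0 : fps_comp bernoulli_denom L 0%N != 0.
  by rewrite /fps_comp big_ord1 mulr1.
have inv_comp : fps_mul (fps_comp bernoulli_denom L)
    (fps_comp (fps_inv bernoulli_denom) L) = fps_one R.
  by rewrite -fps_compM // fps_mulV // fps_comp1.
have inv_divX : fps_mul (fps_comp bernoulli_denom L) (fps_divX L) = fps_one R.
  by rewrite fps_mulC fps_comp_bernoulli_denom.
by rewrite -(fps_inv_unique comp_denom0 inv_comp) (fps_inv_unique comp_denom0 inv_divX).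
Qed.

Lemma fps_comp_bern_log1p s x :
  fps_comp (bern_gf s x) L = fps_mul (fps_pow (fps_divX L) s) (fps_onept_pow x).
Proof.
rewrite /bern_gf fps_compM // fps_comp_pow // fps_comp_inv_bernoulli_denom.
by rewrite fps_comp_scaleX fps_onept_powE.
Qed.

Lemma fps_A_factorV :
  fps_mul (fps_A_factor R) (fps_mul Z (fps_divX L)) = fps_one R.
Proof.
rewrite fps_mulC fps_mulV //.
by rewrite /fps_mul big_ord1 /fps_add /fps_one /fps_X /fps_divX /fps_log1p /=
  addr0 mul1r divr1 oner_neq0.
Qed.

Lemma Atil_gf_shift r s k x :
  Atil_gf r k x =
  fps_mul (Atil_gf (r + s) k (s%:R)) (fps_comp (bern_gf s x) L).
Proof.
rewrite fps_comp_bern_log1p /Atil_gf fps_onept_pow_nat fps_powD.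
set F := fps_pow _ r; set Lif := fps_comp _ _; set P := fps_onept_pow x.
rewrite !fps_mulA; congr (fps_mul _ P); rewrite -!fps_mulA; congr (fps_mul F _).
by rewrite fps_mulCA -!fps_powMn fps_A_factorV fps_pow1n fps_mul1r.
Qed.

End PowerSeries.

Theorem theorem7 (R : numFieldType) (n r s : nat) (k : int) (x : R) :
  Atil n r k x =
  \sum_(m < n.+1)
     (\sum_(l < (n - m).+1)
         'C(n, l)%:R * (stirling1 (n - l) m)%:~R * Atil l (r + s) k (s%:R : R))
     * bernoulli_poly s m x.
Proof.
pose G (l m : nat) := 'C(n, l)%:R * (stirling1 (n - l) m)%:~R *
  Atil l (r + s) k (s%:R : R) * bernoulli_poly s m x.
have G0 l m : (l <= n < l + m)%N -> G l m = 0.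
  by move=> ?; rewrite /G stirling1_lt ?mulr0 ?mul0r //; lia.
transitivity (\sum_(l < n.+1) \sum_(m < n.+1) G l m).
  rewrite /Atil (Atil_gf_shift _ r s) fps_mul_egf; apply: eq_bigr => l _.
  rewrite fps_comp_log1p_egf (sumr_ord_narrow (G l) (n - l).+1).
  - by rewrite mulr_sumr; apply: eq_bigr => m _; rewrite /G /Atil /bernoulli_poly; ring.
  - by rewrite ltnS leq_subr.
  - by move=> m ?; apply: G0; have := ltn_ord l; lia.
rewrite exchange_big /=; apply: eq_bigr => m _.
rewrite mulr_suml (sumr_ord_narrow (G^~ m) (n - m).+1) //.
- by rewrite ltnS leq_subr.
- by move=> l ?; apply: G0; have := ltn_ord m; lia.
Qed.
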